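(* Let $A$ be a lattice with finite generating set $X$, let $P$ be a finite partial lattice, $n\in\mathbb N$, $S:=P^{(\vee\wedge)^n\vee}$, and let $g\colon A\to F(P)$ be a lattice homomorphism. Assume that the sublattice $g(A)$ satisfies Dean's condition (D) for the generating set $g(X)$ and that $g(X)\subseteq S$. Then $g$ is lower bounded if and only if the composition $f\circ g\colon A\to(S,\inf,\vee)$ with the standard homomorphism $f$ is lower bounded.
   Context: A partial lattice $P$ is a set with partially defined finite joins and meets; $F(P)$ is the lattice freely generated by $P$ (generated by $P$, and every map from $P$ into a lattice preserving the defined joins and meets extends uniquely to a homomorphism on $F(P)$). For $W\subseteq F(P)$ let $W^\vee:=\{\bigvee U: U\subseteq W\text{ finite}\}$ and $W^\wedge:=\{\bigwedge U:U\subseteq W\text{ finite}\}$, computed in $F(P)$, with $\bigvee\emptyset:=\bigwedge P$; $P^{(\vee\wedge)^n\vee}$ is obtained from $P$ by applying $(\cdot)^\vee$ then $(\cdot)^\wedge$, $n$ times, followed by one more $(\cdot)^\vee$. $S$ is a finite join-subsemilattice of $F(P)$ with least element $\bigwedge P$, so any $a,b\in S$ have an infimum $\inf(a,b)$ in $S$, and $(S,\inf,\vee)$ is a finite lattice. The standard homomorphism is $f\colon F(P)\to S$, $f(d)=\bigvee\{w\in S: w\le d\}$; it is known to be a lower bounded lattice epimorphism onto $(S,\inf,\vee)$ with $f(d)=d$ for $d\in S$. A lattice homomorphism $g\colon A\to L$ is lower bounded if for every $d\in L$ the set $\{x\in A: g(x)\ge d\}$ is empty or has a least element. Dean's condition (D)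 for a lattice $D$ with finite generating set $Q$: for all finite $S',T\subseteq D$ with $\bigwedge S'\le\bigvee T$, either some $s\in S'$ has $s\le\bigvee T$, or some $t\in T$ has $\bigwedge S'\le t$, or some $q\in Q$ has $\bigwedge S'\le q\le\bigvee T$. *)

From HB Require Import structures.
From mathcomp Require Import all_boot all_order.
From Stdlib Require Import ClassicalEpsilon.
Set Implicit Arguments. Unset Strict Implicit. Unset Printing Implicit Defensive.
Import Order.Theory.
Local Open Scope order_scope.

Definition bigjoin1 {d} {L : latticeType d} (x : L) (s : seq L) : L :=
  foldl (@Order.join d L) x s.
Definition bigmeet1 {d} {L : latticeType d} (x : L) (s : seq L) : L :=
  foldl (@Order.meet d L) x s.

Definition lattice_hom {d1 d2} {L1 : latticeType d1} {L2 : latticeType d2}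
  (h : L1 -> L2) : Prop :=
  (forall x y, h (x `&` y) = h x `&` h y) /\ (forall x y, h (x `|` y) = h x `|` h y).

Inductive lterm (V : Type) : Type :=
  | LVar of V
  | LJoin of lterm V & lterm V
  | LMeet of lterm V & lterm V.

Fixpoint leval {V : Type} {d} {L : latticeType d} (v : V -> L) (t : lterm V) : L :=
  match t with
  | LVar x => v x
  | LJoin t1 t2 => leval v t1 `|` leval v t2
  | LMeet t1 t2 => leval v t1 `&` leval v t2
  end.

Definition generated_by {V : Type} {d} {L : latticeType d} (v : V -> L) : Prop :=
  forall x : L, exists t : lterm V, leval v t = x.

Definition generates {d} {L : latticeType d} (X : seq L) : Prop :=
  generated_by (fun y : seq_sub X => ssval y).

(* A finite partial lattice: a finite poset P together with the partially
   defined joins and meets.  [pj H p] means "the join of the finite set H is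
   defined and equals p", [pm H p] likewise for meets. *)
Definition partial_lattice {dP} {P : finPOrderType dP}
  (pj pm : {set P} -> P -> bool) : Prop :=
  [/\ (forall H p, pj H p -> [/\ H != set0,
          (forall h, h \in H -> h <= p) &
          (forall u, (forall h, h \in H -> h <= u) -> p <= u)]),
      (forall H p, pm H p -> [/\ H != set0,
          (forall h, h \in H -> p <= h) &
          (forall u, (forall h, h \in H -> u <= h) -> u <= p)]) &
      (forall a b : P, a <= b -> pj [set a; b] b /\ pm [set a; b] a)].

Definition preserves_partial {dP} {P : finPOrderType dP}
  (pj pm : {set P} -> P -> bool) {d} {L : latticeType d} (h : P -> L) : Prop :=
  (forall H p x0, pj H p -> x0 \in H -> h p = bigjoin1 (h x0) (map h (enum H))) /\
  (forall H p x0, pm H p -> x0 \in H -> h p = bigmeet1 (h x0) (map h (enum H))).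

Definition freely_generated {dP} {P : finPOrderType dP}
  (pj pm : {set P} -> P -> bool) {dF} {F : latticeType dF} (iota : P -> F) : Prop :=
  [/\ preserves_partial pj pm iota,
      generated_by iota &
      forall d' (M : latticeType d') (h : P -> M), preserves_partial pj pm h ->
        exists k : F -> M, [/\ lattice_hom k, (forall p, k (iota p) = h p) &
          forall k' : F -> M, lattice_hom k' -> (forall p, k' (iota p) = h p) ->
            forall x, k' x = k x]].

Section Closures.
Context {dF} {F : latticeType dF}.

(* W^\/ , with the join of the empty set being [bot] (:= /\ P) *)
Definition join_clos (bot : F) (W : F -> Prop) : F -> Prop :=
  fun x => exists U : seq F, (forall u, u \in U -> W u) /\
    x = match U with [::] => bot | u :: U' => bigjoin1 u U' end.

Definition meet_clos (W : F -> Prop) : F -> Prop :=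
  fun x => exists (u : F) (U : seq F), (forall v, v \in u :: U -> W v) /\
    x = bigmeet1 u U.

End Closures.

(* /\ P computed in F (p0 witnesses that P is nonempty) *)
Definition meetP {dP} {P : finPOrderType dP} {dF} {F : latticeType dF}
  (iota : P -> F) (p0 : P) : F := bigmeet1 (iota p0) (map iota (enum P)).

Definition Sset {dP} {P : finPOrderType dP} {dF} {F : latticeType dF}
  (iota : P -> F) (p0 : P) (n : nat) : F -> Prop :=
  join_clos (meetP iota p0)
    (iter n (fun W => meet_clos (join_clos (meetP iota p0) W))
       (fun x => exists p, x = iota p)).

(* the standard homomorphism f : F -> S, f d = \/ {w in S : w <= d}
   (the join of the finite set {w in S | w <= d}, empty join = /\ P) *)
Definition stdhom {dP} {P : finPOrderType dP} {dF} {F : latticeType dF}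
  (iota : P -> F) (p0 : P) (n : nat) (x : F) : F :=
  epsilon (inhabits (meetP iota p0)) (fun y => exists U : seq F,
    (forall w, w \in U <-> (Sset iota p0 n w /\ w <= x)) /\
    y = match U with [::] => meetP iota p0 | u :: U' => bigjoin1 u U' end).

Definition deanD {d} {L : latticeType d} (D : L -> Prop) (Q : seq L) : Prop :=
  forall (s0 : L) (s : seq L) (t0 : L) (t : seq L),
    (forall x, x \in s0 :: s -> D x) -> (forall y, y \in t0 :: t -> D y) ->
    bigmeet1 s0 s <= bigjoin1 t0 t ->
    [\/ exists2 x, x \in s0 :: s & x <= bigjoin1 t0 t,
        exists2 y, y \in t0 :: t & bigmeet1 s0 s <= y |
        exists2 q, q \in Q & bigmeet1 s0 s <= q <= bigjoin1 t0 t].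

Definition lower_bounded {dA} {A : latticeType dA} {d} {L : latticeType d}
  (h : A -> L) (C : L -> Prop) : Prop :=
  forall e : L, C e ->
    (forall x, ~ (e <= h x)) \/
    (exists x0, e <= h x0 /\ forall x, e <= h x -> x0 <= x).

(* Using it we show that
      the free lattice F(P) satisfies a 2 x 2 instance of Dean's condition:
      if s1 /\ s2 <= t1 \/ t2 is not explained by a comparison of the four
      elements, then some generator lies in [s1 /\ s2, t1 \/ t2]
      ([free_dean_2x2]).  Otherwise the generators avoid this interval, so the
      free lattice maps into the doubled lattice, where the inequality fails.
   3. Lower boundedness of g at a single element y ([lb_at g y]) is closed
      under joins, and -- using the 2 x 2 condition and an induction over the
      generators X of A -- under meets.  Hence if F is generated by a finite
      family w witnessing the 2 x 2 condition, and g is lower bounded at each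
      w i and each g x (x in X), then g is lower bounded everywhere
      ([lb_at_all]).
   4. S is finite, so f is well defined and e <= f d <-> e <= d for e in S
      ([stdhom_le_iff]); thus g and f o g are lower bounded at the same points
      of S.  The theorem follows since iota(P) is contained in S. *)

From HB Require Import structures.
From mathcomp Require Import all_boot all_order.
From Stdlib Require Import Classical ClassicalEpsilon.
Import Order.Theory.
Local Open Scope order_scope.

Section FiniteJoinsMeets.
Context {d} {L : latticeType d}.

Lemma bigjoin1_le (x : L) s z :
  (bigjoin1 x s <= z) = (x <= z) && all (fun y => y <= z) s.
Proof.
elim: s x => [|y s IH] x /=; first by rewrite andbT.
by rewrite /bigjoin1 /= -/(bigjoin1 _ _) IH leUx andbA.
Qed.

Lemma le_bigmeet1 (x : L) s z :
  (z <= bigmeet1 x s) = (z <= x) && all (fun y => z <= y) s.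
Proof.
elim: s x => [|y s IH] x /=; first by rewrite andbT.
by rewrite /bigmeet1 /= -/(bigmeet1 _ _) IH lexI andbA.
Qed.

Lemma bigjoin1_leP (x : L) s z :
  (forall y, y \in x :: s -> y <= z) -> bigjoin1 x s <= z.
Proof.
move=> H; rewrite bigjoin1_le H ?mem_head //=.
by apply/allP => y ys; apply: H; rewrite inE ys orbT.
Qed.

Lemma le_bigmeet1P (x : L) s z :
  (forall y, y \in x :: s -> z <= y) -> z <= bigmeet1 x s.
Proof.
move=> H; rewrite le_bigmeet1 H ?mem_head //=.
by apply/allP => y ys; apply: H; rewrite inE ys orbT.
Qed.

Lemma le_bigjoin1 (x : L) s y : y \in x :: s -> y <= bigjoin1 x s.
Proof.
move: (lexx (bigjoin1 x s)); rewrite bigjoin1_le => /andP[xj /allP sj].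
by rewrite inE => /orP[/eqP->|/sj].
Qed.

Lemma bigmeet1_le (x : L) s y : y \in x :: s -> bigmeet1 x s <= y.
Proof.
move: (lexx (bigmeet1 x s)); rewrite le_bigmeet1 => /andP[mx /allP ms].
by rewrite inE => /orP[/eqP->|/ms].
Qed.

Lemma bigjoin1_eq (x : L) s y r : (forall z, z \in x :: s <-> z \in y :: r) ->
  bigjoin1 x s = bigjoin1 y r.
Proof.
move=> E; apply/le_anti/andP; split; apply: bigjoin1_leP => z zs;
  by apply: le_bigjoin1; apply/E.
Qed.

Lemma bigmeet1_eq (x : L) s y r : (forall z, z \in x :: s <-> z \in y :: r) ->
  bigmeet1 x s = bigmeet1 y r.
Proof.
move=> E; apply/le_anti/andP; split; apply: le_bigmeet1P => z zs;
  by apply: bigmeet1_le; apply/E.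
Qed.

End FiniteJoinsMeets.

Section Homomorphisms.
Context {d1 d2} {L1 : latticeType d1} {L2 : latticeType d2} (h : L1 -> L2).
Hypothesis h_hom : lattice_hom h.

Lemma hom_le x y : x <= y -> h x <= h y.
Proof. by case: h_hom => hI _ /meet_l <-; rewrite hI leIr. Qed.

Lemma hom_bigjoin1 x s : h (bigjoin1 x s) = bigjoin1 (h x) (map h s).
Proof.
case: h_hom => _ hU; elim: s x => [|y s IH] x //=.
by rewrite /bigjoin1 /= -!/(bigjoin1 _ _) IH hU.
Qed.

Lemma hom_bigmeet1 x s : h (bigmeet1 x s) = bigmeet1 (h x) (map h s).
Proof.
case: h_hom => hI _; elim: s x => [|y s IH] x //=.
by rewrite /bigmeet1 /= -!/(bigmeet1 _ _) IH hI.
Qed.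

End Homomorphisms.
Arguments hom_le {d1 d2 L1 L2 h} h_hom {x y}.
Arguments hom_bigjoin1 {d1 d2 L1 L2 h}.
Arguments hom_bigmeet1 {d1 d2 L1 L2 h}.

Lemma gen_ind {V : Type} {d} {L : latticeType d} {v : V -> L} :
  generated_by v -> forall Q : L -> Prop, (forall p, Q (v p)) ->
  (forall a b, Q a -> Q b -> Q (a `|` b)) ->
  (forall a b, Q a -> Q b -> Q (a `&` b)) ->
  forall x, Q x.
Proof.
move=> gen Q Qv QU QI x; have [tm <-] := gen x.
by elim: tm => [p|t1 IH1 t2 IH2|t1 IH1 t2 IH2] /=; auto.
Qed.

(* Day's doubling of the interval [s, t] of a lattice F: the elements of F
   outside [s, t] are kept, those inside are doubled.  It is encoded inside
   F * bool: (x, b) with b = true exactly for the upper copy or for x above s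
   and not below t; the order is componentwise. *)
Definition dbl_ok {d} {F : latticeType d} (s t : F) (p : F * bool) : bool :=
  if s <= p.1 then (p.1 <= t) || p.2 else ~~ p.2.

Record dbl {d} {F : latticeType d} (s t : F) :=
  Dbl { dv : F * bool; dok : dbl_ok s t dv }.
Arguments dv {d F s t}.
Arguments Dbl {d F s t}.

HB.instance Definition _ d (F : latticeType d) (s t : F) :=
  [isSub for (@dv d F s t)].
HB.instance Definition _ d (F : latticeType d) (s t : F) :=
  [Equality of dbl s t by <:].
HB.instance Definition _ d (F : latticeType d) (s t : F) :=
  [Choice of dbl s t by <:].

Fact dbl_display : Order.disp_t. Proof. exact: Order.Disp tt tt. Qed.

Section DoublingOrder.
Context {d} {F : latticeType d} (s t : F).

Definition dle (a b : dbl s t) : bool :=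
  ((dv a).1 <= (dv b).1) && ((dv a).2 ==> (dv b).2).

Lemma dle_refl : reflexive dle.
Proof. by move=> a; rewrite /dle lexx implybb. Qed.

Lemma dle_anti : antisymmetric dle.
Proof.
move=> [[x i] hi] [[y j] hj]; rewrite /dle /= => /andP[/andP[xy ij] /andP[yx ji]].
apply/val_inj => /=; congr pair; first by apply/le_anti; rewrite xy yx.
by move: ij ji {hi hj}; case: i; case: j.
Qed.

Lemma dle_trans : transitive dle.
Proof.
move=> b a c; rewrite /dle => /andP[ab1 ab2] /andP[bc1 bc2].
by rewrite (le_trans ab1 bc1) /=; move: ab2 bc2; case: (dv a).2; case: (dv b).2.
Qed.

End DoublingOrder.

HB.instance Definition _ d (F : latticeType d) (s t : F) :=
  Order.Le_isPOrder.Build dbl_display (dbl s t)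
    (@dle_refl d F s t) (@dle_anti d F s t) (@dle_trans d F s t).

Section DoublingLattice.
Context {d} {F : latticeType d} (s t : F).

Lemma dmeet_ok (a b : dbl s t) :
  dbl_ok s t ((dv a).1 `&` (dv b).1, (dv a).2 && (dv b).2).
Proof.
case: a b => [[x i] hi] [[y j] hj]; rewrite /dbl_ok /= in hi hj *.
rewrite lexI; move: hi hj; case: (s <= x); case: (s <= y) => /= hi hj;
  last by rewrite (negbTE hi).
- case/orP: hi => [xt|->]; first by rewrite leIxl.
  by case/orP: hj => [yt|->]; [rewrite leIxr | rewrite orbT].
- by rewrite (negbTE hj) andbF.
- by rewrite (negbTE hi).
Qed.

Definition djbit (x y : F) (i j : bool) : bool :=
  [|| i, j | (s <= x `|` y) && ~~ (x `|` y <= t)].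

Lemma djoin_ok (a b : dbl s t) :
  dbl_ok s t ((dv a).1 `|` (dv b).1, djbit (dv a).1 (dv b).1 (dv a).2 (dv b).2).
Proof.
case: a b => [[x i] hi] [[y j] hj]; rewrite /dbl_ok /djbit /= in hi hj *.
case sxy: (s <= x `|` y) => /=; first by case: (x `|` y <= t); rewrite ?orbT.
have [sx sy] : (s <= x) = false /\ (s <= y) = false.
  by split; apply/negbTE/negP => h; move: sxy;
    rewrite (le_trans h) ?(leUl, leUr).
by rewrite sx sy in hi hj; rewrite (negbTE hi) (negbTE hj).
Qed.

Definition dmeet (a b : dbl s t) : dbl s t := Dbl _ (dmeet_ok a b).
Definition djoin (a b : dbl s t) : dbl s t := Dbl _ (djoin_ok a b).

Lemma dmeetP (x y z : dbl s t) : (x <= dmeet y z) = (x <= y) && (x <= z).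
Proof.
case: x y z => [[x i] hi] [[y j] hj] [[z k] hk].
rewrite /Order.le /= /dle /= lexI; clear hi hj hk.
by case: i; case: j; case: k; case: (x <= y); case: (x <= z).
Qed.

Lemma djoinP (x y z : dbl s t) : (djoin x y <= z) = (x <= z) && (y <= z).
Proof.
case: x y z => [[x i] hi] [[y j] hj] [[z k] hk].
rewrite /Order.le /= /dle /= leUx /djbit; clear hi hj.
case xz: (x <= z); case yz: (y <= z); rewrite /= ?andbF //.
case: k hk => hk; first by rewrite !implybT.
rewrite !implybF; case sxy: (s <= x `|` y); last by rewrite /= orbF negb_or.
have sz : s <= z by rewrite (le_trans sxy) // leUx xz yz.
rewrite /dbl_ok /= sz orbF in hk.
by rewrite /= (le_trans _ hk) ?leUx ?xz ?yz //= orbF negb_or.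
Qed.

End DoublingLattice.

HB.instance Definition _ d (F : latticeType d) (s t : F) :=
  Order.POrder_MeetJoin_isLattice.Build dbl_display (dbl s t)
    (@dmeetP d F s t) (@djoinP d F s t).

Section DoublingFacts.
Context {d} {F : latticeType d} (s t : F).

Lemma lift_ok (x : F) : dbl_ok s t (x, (s <= x) && ~~ (x <= t)).
Proof. by rewrite /dbl_ok /=; case: (s <= x); case: (x <= t). Qed.

Definition lift (x : F) : dbl s t := Dbl _ (lift_ok x).

Lemma lift_out (a : dbl s t) :
  ~~ ((s <= (dv a).1) && ((dv a).1 <= t)) -> a = lift (dv a).1.
Proof.
case: a => [[x i] hi] /= h; apply/val_inj => /=; congr pair.
rewrite /dbl_ok /= in hi; move: h hi; case: (s <= x) => /=; last by case: i.
by move/negbTE->.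
Qed.

Lemma dfst_hom : lattice_hom (fun a : dbl s t => (dv a).1).
Proof. by []. Qed.

End DoublingFacts.

Section FreeLatticeDean.
Context {dP} {P : finPOrderType dP} (pj pm : {set P} -> P -> bool).
Context {dF} {F : latticeType dF} (iota : P -> F).
Hypothesis free : freely_generated pj pm iota.
Variables s t : F.

Definition avoids_interval : Prop :=
  forall p, ~~ ((s <= iota p) && (iota p <= t)).

Hypothesis avoid : avoids_interval.

Lemma lift_preserves_partial :
  preserves_partial pj pm (fun p => lift s t (iota p)).
Proof.
have [[iota_j iota_m] _ _] := free.
have fst_lift l : map (fun a : dbl s t => (dv a).1)
  (map (fun p => lift s t (iota p)) l) = map iota l by rewrite -map_comp.
have lifted (a : dbl s t) p : (dv a).1 = iota p -> lift s t (iota p) = a.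
  by move=> ap; rewrite [RHS]lift_out ap ?avoid.
split=> H p x0 Hp Hx0; apply: lifted.
- by rewrite (hom_bigjoin1 (dfst_hom s t)) fst_lift -(iota_j H p x0 Hp Hx0).
- by rewrite (hom_bigmeet1 (dfst_hom s t)) fst_lift -(iota_m H p x0 Hp Hx0).
Qed.

Lemma free_into_doubling : exists k : F -> dbl s t,
  [/\ lattice_hom k, forall x, (dv (k x)).1 = x &
      forall x, ~~ ((s <= x) && (x <= t)) -> k x = lift s t x].
Proof.
have [_ gen univ] := free.
have [k [k_hom k_iota _]] := univ _ _ _ lift_preserves_partial.
have k_fst x : (dv (k x)).1 = x.
  elim/(gen_ind gen): x => [p|a b Ha Hb|a b Ha Hb]; first by rewrite k_iota.
  - by case: k_hom => _ ->; rewrite /= Ha Hb.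
  - by case: k_hom => -> _; rewrite /= Ha Hb.
by exists k; split=> // x out; rewrite [LHS]lift_out k_fst.
Qed.

End FreeLatticeDean.
Arguments free_into_doubling {dP P pj pm dF F iota} free {s t}.

Lemma free_dean_2x2 {dP} {P : finPOrderType dP} {pj pm : {set P} -> P -> bool}
  {dF} {F : latticeType dF} {iota : P -> F} :
  freely_generated pj pm iota -> forall s1 s2 t1 t2 : F,
  s1 `&` s2 <= t1 `|` t2 ->
  [\/ s1 <= t1 `|` t2 \/ s2 <= t1 `|` t2,
      s1 `&` s2 <= t1 \/ s1 `&` s2 <= t2 |
      exists p, s1 `&` s2 <= iota p <= t1 `|` t2].
Proof.
move=> free s1 s2 t1 t2 st; apply: NNPP => fails.
have nle1 : ~~ (s1 <= t1 `|` t2) by apply/negP => h; apply: fails; apply: Or31; left.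
have nle2 : ~~ (s2 <= t1 `|` t2) by apply/negP => h; apply: fails; apply: Or31; right.
have nle3 : ~~ (s1 `&` s2 <= t1) by apply/negP => h; apply: fails; apply: Or32; left.
have nle4 : ~~ (s1 `&` s2 <= t2) by apply/negP => h; apply: fails; apply: Or32; right.
have avoid : avoids_interval iota (s1 `&` s2) (t1 `|` t2).
  by move=> p; apply/negP => h; apply: fails; apply: Or33; exists p.
have [k [k_hom k_fst k_lift]] := free_into_doubling free avoid.
have bitE x : ~~ ((s1 `&` s2 <= x) && (x <= t1 `|` t2)) ->
    (dv (k x)).2 = (s1 `&` s2 <= x) && ~~ (x <= t1 `|` t2).
  by move/k_lift->.
(* k is monotone, but the bit of k (s1 /\ s2) is set while that of
   k (t1 \/ t2) is not. *)
have := hom_le k_hom st; case: k_hom => kI kU; rewrite kI kU /Order.le /= /dle /=.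
rewrite !bitE ?leIl ?leIr ?(negbTE nle1) ?(negbTE nle2) ?(negbTE nle3) ?(negbTE nle4) //.
by rewrite /djbit !k_fst lexx st.
Qed.

Section LowerBoundedAt.
Context {dA} {A : latticeType dA} {d} {F : latticeType d} (g : A -> F).

Definition least_above (y : F) (c : A) : Prop :=
  y <= g c /\ forall x, y <= g x -> c <= x.

Definition lb_at (y : F) : Prop :=
  (forall x, ~ y <= g x) \/ exists c, least_above y c.

Lemma lower_boundedE (C : F -> Prop) :
  lower_bounded g C <-> forall y, C y -> lb_at y.
Proof. by []. Qed.

Lemma lb_at_least y x : lb_at y -> y <= g x -> exists c, least_above y c.
Proof. by case=> [none|//] yx; case: (none x). Qed.

Hypothesis g_hom : lattice_hom g.

Lemma lb_at_join a b : lb_at a -> lb_at b -> lb_at (a `|` b).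
Proof.
case: g_hom => _ gU.
move=> [none_a|[ca [aca camin]]].
  by left=> x ax; apply: (none_a x); apply: le_trans ax; apply: leUl.
move=> [none_b|[cb [bcb cbmin]]].
  by left=> x bx; apply: (none_b x); apply: le_trans bx; apply: leUr.
right; exists (ca `|` cb); split; first by rewrite gU leU2.
by move=> x; rewrite leUx => /andP[ax bx]; rewrite leUx camin ?cbmin.
Qed.

Lemma least_above_choice (e : F) (Ys : seq F) : exists C : seq A,
  (forall c, c \in C -> e <= g c) /\
  (forall y, y \in Ys -> e <= y -> (exists c, least_above y c) ->
     exists2 c, c \in C & least_above y c).
Proof.
elim: Ys => [|y Ys [C [C_above C_least]]]; first by exists [::].
have [[ey [c lc]]|not_y] := classic (e <= y /\ exists c, least_above y c).
- exists (c :: C); split=> [c'|y'].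
    by rewrite inE => /orP[/eqP->|/C_above //]; apply: le_trans ey (proj1 lc).
  rewrite inE => /orP[/eqP-> _ _|y'Ys ey' ly']; first by exists c; rewrite ?mem_head.
  by have [c' c'C lc'] := C_least y' y'Ys ey' ly'; exists c'; rewrite ?inE ?c'C ?orbT.
- exists C; split=> // y'; rewrite inE => /orP[/eqP-> ey ly|]; last exact: C_least.
  by case: not_y.
Qed.

End LowerBoundedAt.
Arguments lb_at_least {dA A d F g y x}.

Lemma lb_at_transfer {dA} {A : latticeType dA} {d} {F : latticeType d}
  (g g' : A -> F) (y : F) :
  (forall x, y <= g' x <-> y <= g x) -> lb_at g' y <-> lb_at g y.
Proof.
move=> E; split=> [[none|[c [yc cmin]]]|[none|[c [yc cmin]]]].
- by left=> x /E; apply: none.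
- by right; exists c; split=> [|x /E]; [apply/E | apply: cmin].
- by left=> x /E; apply: none.
- by right; exists c; split=> [|x /E]; [apply/E | apply: cmin].
Qed.

Section MeetStep.
Context {dA} {A : latticeType dA} (X : seq A) {I : finType}.
Context {d} {F : latticeType d} (w : I -> F) (g : A -> F).
Hypothesis genX : generates X.
Hypothesis g_hom : lattice_hom g.
Hypothesis dean_w : forall s1 s2 t1 t2 : F, s1 `&` s2 <= t1 `|` t2 ->
  [\/ s1 <= t1 `|` t2 \/ s2 <= t1 `|` t2, s1 `&` s2 <= t1 \/ s1 `&` s2 <= t2 |
      exists i, s1 `&` s2 <= w i <= t1 `|` t2].
Hypothesis lb_w : forall i, lb_at g (w i).
Hypothesis lb_X : forall x, x \in X -> lb_at g (g x).

(* The least preimage bound of a /\ b is the meet m of the least bounds of the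
   finitely many relevant points above a /\ b (a, b, the w i and the g x for x
   in X); m is below every x with a /\ b <= g x, by induction on x over X. *)
Lemma lb_at_meet a b : lb_at g a -> lb_at g b -> lb_at g (a `&` b).
Proof.
move=> lba lbb; set e := a `&` b.
have [[x1 ex1]|none] := classic (exists x, e <= g x); last first.
  by left=> x ex; apply: none; exists x.
set Ys := [:: a; b] ++ map w (enum I) ++ map g X.
have [C [C_above C_least]] := least_above_choice g e Ys.
pose m := bigmeet1 x1 C.
have below_m y x : y \in Ys -> e <= y -> lb_at g y -> y <= g x -> m <= x.
  move=> yYs ey lby yx; have [c lc] := lb_at_least lby yx.
  have [c' c'C [_ c'min]] := C_least y yYs ey (ex_intro _ c lc).
  by apply: le_trans (c'min x yx); apply: bigmeet1_le; rewrite inE c'C orbT.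
have [gI gU] := g_hom.
have m_min x : e <= g x -> m <= x.
  elim/(gen_ind genX): x => [q|x y IHx IHy|x y IHx IHy].
  - move=> eq_le; apply: (below_m (g (ssval q))) => //; last exact: lb_X (ssvalP q).
    by rewrite !mem_cat map_f ?orbT ?ssvalP.
  - rewrite gU => exy; have [[ax|bx]|[ex|ey]|[i /andP[ei ix]]] := dean_w _ _ _ _ exy.
    + apply: (below_m a); rewrite ?gU ?leIl //.
      by rewrite mem_cat mem_head.
    + apply: (below_m b); rewrite ?gU ?leIr //.
      by rewrite !mem_cat !inE eqxx orbT.
    + by apply: le_trans (IHx ex) _; apply: leUl.
    + by apply: le_trans (IHy ey) _; apply: leUr.
    + apply: (below_m (w i)); rewrite ?gU //.
      by rewrite !mem_cat map_f ?mem_enum ?orbT.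
  - by rewrite gI lexI => /andP[ex ey]; rewrite lexI IHx ?IHy.
right; exists m; split=> //; rewrite (hom_bigmeet1 g_hom).
by apply: le_bigmeet1P => y; rewrite inE => /orP[/eqP->|/mapP[c /C_above ? ->]].
Qed.

Lemma lb_at_all : generated_by w -> forall y, lb_at g y.
Proof.
move=> genF; elim/(gen_ind genF) => [i|a b|a b]; first exact: lb_w.
- exact: lb_at_join.
- exact: lb_at_meet.
Qed.

End MeetStep.
Arguments lb_at_all {dA A X I d F w g}.

Fixpoint subseqs {T : Type} (l : seq T) : seq (seq T) :=
  if l is x :: l' then subseqs l' ++ map (cons x) (subseqs l') else [:: [::]].

Lemma filter_subseqs {T : eqType} (p : pred T) (l : seq T) :
  filter p l \in subseqs l.
Proof.
elim: l => //= x l IH; rewrite mem_cat.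
by case: (p x); rewrite ?IH ?map_f ?orbT.
Qed.

Lemma exists_filter {T : eqType} (R : T -> Prop) (l : seq T) :
  exists U : seq T, forall z, z \in U <-> z \in l /\ R z.
Proof.
elim: l => [|x l [U HU]]; first by exists [::] => z; split=> [|[]].
have [Rx|nRx] := classic (R x); [exists (x :: U) | exists U] => z; rewrite !inE.
- split=> [/orP[/eqP->|/HU[zl Rz]]|[/orP[/eqP->|zl] Rz]].
  + by rewrite eqxx.
  + by rewrite zl orbT.
  + by rewrite eqxx.
  + by apply/orP; right; apply/HU.
- split=> [/HU[zl Rz]|[/orP[/eqP zx|zl] Rz]]; first by rewrite zl orbT.
  + by case: nRx; rewrite -zx.
  + exact/HU.
Qed.

Section FiniteClosures.
Context {d} {F : latticeType d}.

Definition finiteP (W : F -> Prop) : Prop :=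
  exists L : seq F, forall x, W x -> x \in L.

Definition fold1 (op : F -> F -> F) (dflt : F) (U : seq F) : F :=
  if U is u :: U' then foldl op u U' else dflt.

Variable op : F -> F -> F.
Hypothesis op_set : forall x s y r, (forall z, z \in x :: s <-> z \in y :: r) ->
  foldl op x s = foldl op y r.

Lemma fold1_filter dflt (U L : seq F) : {subset U <= L} ->
  fold1 op dflt U = fold1 op dflt (filter (fun y => y \in U) L).
Proof.
case: U => [|u U] UL; first by elim: L {UL}.
have : u \in filter (fun y => y \in u :: U) L by rewrite mem_filter mem_head UL ?mem_head.
case E: (filter _ L) => [//|v V] _ /=; apply: op_set => z.
by rewrite -E mem_filter; split=> [zU|/andP[]//]; rewrite zU UL.
Qed.

Lemma finite_fold1 dflt (W : F -> Prop) : finiteP W ->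
  finiteP (fun x => exists U, (forall u, u \in U -> W u) /\ x = fold1 op dflt U).
Proof.
move=> [L WL]; exists (map (fold1 op dflt) (subseqs L)) => x [U [UW ->]].
by rewrite (@fold1_filter _ U L) ?map_f ?filter_subseqs // => u /UW /WL.
Qed.

End FiniteClosures.
Arguments finite_fold1 {d F op} op_set dflt {W}.

Lemma finite_join_clos {d} {F : latticeType d} (bot : F) (W : F -> Prop) :
  finiteP W -> finiteP (join_clos bot W).
Proof.
move=> finW; have [M HM] := finite_fold1 bigjoin1_eq bot finW.
by exists M => x [U [UW ->]]; apply: HM; exists U.
Qed.

Lemma finite_meet_clos {d} {F : latticeType d} (W : F -> Prop) :
  finiteP W -> finiteP (meet_clos W).
Proof.
case=> [[|l L] WL].
  by exists [::] => x [u [U [UW _]]]; have := WL u (UW u (mem_head _ _)).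
have [M HM] := finite_fold1 bigmeet1_eq l (ex_intro _ (l :: L) WL).
by exists M => x [u [U [UW ->]]]; apply: HM; exists (u :: U).
Qed.

Lemma join_clos_self {d} {F : latticeType d} (bot : F) (W : F -> Prop) x :
  W x -> join_clos bot W x.
Proof. by exists [:: x]; split=> // u; rewrite mem_seq1 => /eqP->. Qed.

Lemma meet_clos_self {d} {F : latticeType d} (W : F -> Prop) x :
  W x -> meet_clos W x.
Proof. by exists x, [::]; split=> // u; rewrite mem_seq1 => /eqP->. Qed.

Section StandardHomomorphism.
Context {dP} {P : finPOrderType dP} {dF} {F : latticeType dF}.
Variables (iota : P -> F) (p0 : P) (n : nat).

Lemma Sset_finite : finiteP (Sset iota p0 n).
Proof.
apply: finite_join_clos; elim: n => [|k IH] /=.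
  by exists (map iota (enum P)) => x [p ->]; rewrite map_f ?mem_enum.
exact/finite_meet_clos/finite_join_clos.
Qed.

Lemma iota_in_Sset p : Sset iota p0 n (iota p).
Proof.
apply: join_clos_self; elim: n => [|k IH] /=; first by exists p.
exact/meet_clos_self/join_clos_self.
Qed.

Lemma meetP_le : generated_by iota -> forall x, meetP iota p0 <= x.
Proof.
move=> gen; elim/(gen_ind gen) => [p|a b le_a _|a b le_a le_b].
- by apply: bigmeet1_le; rewrite inE map_f ?mem_enum ?orbT.
- exact: lexUl.
- by rewrite lexI le_a le_b.
Qed.

Lemma stdhom_spec x : exists U,
  (forall w, w \in U <-> Sset iota p0 n w /\ w <= x) /\
  stdhom iota p0 n x = fold1 Order.join (meetP iota p0) U.
Proof.
apply: (epsilon_spec (inhabits (meetP iota p0))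
  (fun y => exists U, (forall w, w \in U <-> Sset iota p0 n w /\ w <= x) /\
    y = fold1 Order.join (meetP iota p0) U)).
have [L SL] := Sset_finite.
have [U HU] := exists_filter (fun w => Sset iota p0 n w /\ w <= x) L.
exists (fold1 Order.join (meetP iota p0) U), U; split=> // w.
by rewrite HU; split=> [[]|[Sw wx]] //; split=> //; apply: SL.
Qed.

(* For e in S, e <= f x iff e <= x: f o g and g have the same upper sets
   above points of S. *)
Lemma stdhom_le_iff : generated_by iota -> forall e x, Sset iota p0 n e ->
  e <= stdhom iota p0 n x <-> e <= x.
Proof.
move=> gen e x Se; have [U [HU ->]] := stdhom_spec x; split=> [ef|ex].
- apply: le_trans ef _; case: U HU => [|u U] HU /=; first exact: meetP_le.
  by apply: bigjoin1_leP => w /HU[].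
- have : e \in U by apply/HU.
  by case: U HU => [//|u U] _ eU; apply: le_bigjoin1.
Qed.

End StandardHomomorphism.

Theorem mainTheorem14
  (dA : Order.disp_t) (A : latticeType dA) (X : seq A)
  (dP : Order.disp_t) (P : finPOrderType dP) (pj pm : {set P} -> P -> bool)
  (dF : Order.disp_t) (F : latticeType dF) (iota : P -> F)
  (p0 : P) (n : nat) (g : A -> F) :
  generates X ->
  partial_lattice pj pm ->
  freely_generated pj pm iota ->
  lattice_hom g ->
  deanD (fun y => exists x, y = g x) (map g X) ->
  (forall x, x \in X -> Sset iota p0 n (g x)) ->
  lower_bounded g (fun _ => True) <->
  lower_bounded (fun x => stdhom iota p0 n (g x)) (Sset iota p0 n).
Proof.
move=> genX _ free g_hom _ gX_S.
have genF : generated_by iota by case: free.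
have transfer e : Sset iota p0 n e ->
    lb_at (fun x => stdhom iota p0 n (g x)) e <-> lb_at g e.
  by move=> Se; apply: lb_at_transfer => x; apply: stdhom_le_iff.
rewrite !lower_boundedE; split=> [lb_g e Se | lb_fg e _].
  exact/transfer/lb_g.
have lb_S y : Sset iota p0 n y -> lb_at g y by move=> Sy; apply/transfer/lb_fg.
apply: (lb_at_all genX g_hom (free_dean_2x2 free)) genF e => [p|x /gX_S /lb_S //].
exact/lb_S/iota_in_Sset.
Qed.
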